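(* Let $\tau,\alpha,b>0$ satisfy $\alpha b>\tau$, let $B>0$ satisfy $\frac1b<B<\frac\alpha\tau$, and let $0<\gamma_\star<\gamma^\star$. Then there exist $\delta_1>0$ and $k_1,k_2>0$, depending only on $\Omega,\tau,\alpha,b,B,\gamma_\star,\gamma^\star$, such that whenever $\delta\in(0,\delta_1]$, $D>0$, the data are as in the context, $\varepsilon\in(0,1)$ and $T\in(0,T_{max,\varepsilon})$ are such that $\gamma_\star\le\gamma_\varepsilon(\Theta_\varepsilon)\le\gamma^\star$ in $\Omega\times(0,T)$, then for all $t\in(0,T)$, $$k_1\Big(\int_\Omega w_{\varepsilon x}^2+\int_\Omega v_{\varepsilon xx}^2+\int_\Omega u_{\varepsilon xx}^2+\varepsilon\int_\Omega u_{\varepsilon xxx}^2\Big)\le y_\varepsilon^{(B,\delta)}(t)\le k_2\Big(\int_\Omega w_{\varepsilon x}^2+\int_\Omega v_{\varepsilon xx}^2+\int_\Omega u_{\varepsilon xx}^2+\varepsilon\int_\Omega u_{\varepsilon xxx}^2\Big).$$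
   Context: Let $\Omega\subset\mathbb R$ be a bounded open interval and $D,\tau,\alpha,b>0$. Let $(\gamma_\varepsilon)_{\varepsilon\in(0,1)}\subset C^\infty([0,\infty);[0,\infty))$ and let $(u_{0\varepsilon}),(v_{0\varepsilon}),(w_{0\varepsilon}),(\Theta_{0\varepsilon})_{\varepsilon\in(0,1)}\subset C^\infty(\overline\Omega)$ be such that for each $\varepsilon$ the derivatives $u_{0\varepsilon x},v_{0\varepsilon x},w_{0\varepsilon x},\Theta_{0\varepsilon x}$ are compactly supported in $\Omega$, $\int_\Omega u_{0\varepsilon}=\int_\Omega v_{0\varepsilon}=\int_\Omega w_{0\varepsilon}=0$, and $\Theta_{0\varepsilon}\ge0$. For $\varepsilon\in(0,1)$ consider the regularized problem $$\tau w_{\varepsilon t}=\varepsilon w_{\varepsilon xx}+b(\gamma_\varepsilon(\Theta_\varepsilon)v_{\varepsilon x})_x+(\gamma_\varepsilon(\Theta_\varepsilon)u_{\varepsilon x})_x-\alpha w_\varepsilon,\quad v_{\varepsilon t}=\varepsilon v_{\varepsilon xx}+w_\varepsilon,\quad u_{\varepsilon t}=\varepsilon u_{\varepsilon xx}+v_\varepsilon,\quad \Theta_{\varepsilon t}=D\Theta_{\varepsilon xx}+b\gamma_\varepsilon(\Theta_\varepsilon)v_{\varepsilon x}^2$$ in $\Omega\times(0,\infty)$, with $w_{\varepsilon x}=v_{\varepsilon x}=u_{\varepsilon x}=\Theta_{\varepsilon x}=0$ on $\partial\Omega$ and initial values $w_{0\varepsilon},v_{0\varepsilon},u_{0\varepsilon},\Theta_{0\varepsilon}$.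 It is known that for each $\varepsilon$ there exist $T_{max,\varepsilon}\in(0,\infty]$ and a classical solution $(w_\varepsilon,v_\varepsilon,u_\varepsilon,\Theta_\varepsilon)$, each component in $C^{2,1}(\overline\Omega\times[0,T_{max,\varepsilon}))\cap C^\infty(\overline\Omega\times(0,T_{max,\varepsilon}))$, with $\Theta_\varepsilon\ge0$, $\int_\Omega w_\varepsilon=\int_\Omega v_\varepsilon=\int_\Omega u_\varepsilon=0$ for all times, and such that if $T_{max,\varepsilon}<\infty$ then $\limsup_{t\nearrow T_{max,\varepsilon}}\{\|w_\varepsilon\|_{L^\infty}+\|v_\varepsilon\|_{W^{1,2}}+\|u_\varepsilon\|_{W^{1,2}}+\|\Theta_\varepsilon\|_{L^\infty}\}=\infty$. Subscripts $x,t$ denote partial derivatives; $\int_\Omega$ integrates in $x$ at time $t$. For $B>0,\delta>0$ define, for $t\in[0,T_{max,\varepsilon})$ (with $\gamma_\varepsilon=\gamma_\varepsilon(\Theta_\varepsilon)$), $$y_\varepsilon^{(B,\delta)}(t):=\frac\tau2\int_\Omega w_{\varepsilon x}^2+\frac b2\int_\Omega\gamma_\varepsilon v_{\varepsilon xx}^2+\frac{B+b\delta}{2}\int_\Omega\gamma_\varepsilon u_{\varepsilon xx}^2+\frac{\alpha B-\tau\delta}{2}\int_\Omega v_{\varepsilon x}^2+\int_\Omega\gamma_\varepsilon u_{\varepsilon xx}v_{\varepsilon xx}+\varepsilon\int_\Omega\gamma_\varepsilon u_{\varepsilon xxx}^2$$ $$+\frac{(1+\tau)B\varepsilon}{2}\int_\Omega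 v_{\varepsilon xx}^2+\tau B\int_\Omega v_{\varepsilon x}w_{\varepsilon x}+\tau\delta\int_\Omega u_{\varepsilon x}w_{\varepsilon x}+\alpha\delta\int_\Omega u_{\varepsilon x}v_{\varepsilon x}.$$ *)

From Stdlib Require Import Reals List.
From Coquelicot Require Import Coquelicot.
Open Scope R_scope.

(* Functions of (x,t) are modelled as f : R -> R -> R, f x t. *)

Definition dx (f : R -> R -> R) : R -> R -> R := fun x t => Derive (fun y => f y t) x.
Definition dt (f : R -> R -> R) : R -> R -> R := fun x t => Derive (fun s => f x s) t.

Fixpoint pd (l : list bool) (f : R -> R -> R) : R -> R -> R :=
  match l with
  | nil => f
  | true :: l' => dx (pd l' f)
  | false :: l' => dt (pd l' f)
  end.

Definition cont2 (g : R -> R -> R) (x t : R) : Prop :=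
  continuous (fun p : R * R => g (fst p) (snd p)) (x, t).

(* f is C^infty on a neighbourhood of each point of S (so up to the boundary of S) *)
Definition smooth2_near (S : R -> R -> Prop) (f : R -> R -> R) : Prop :=
  forall x t, S x t -> exists r, 0 < r /\
    forall y s, Rabs (y - x) < r -> Rabs (s - t) < r ->
      forall l : list bool,
        ex_derive (fun y' => pd l f y' s) y /\
        ex_derive (fun s' => pd l f y s') s /\
        cont2 (pd l f) y s.

Definition C21_near (S : R -> R -> Prop) (f : R -> R -> R) : Prop :=
  forall x t, S x t -> exists r, 0 < r /\
    forall y s, Rabs (y - x) < r -> Rabs (s - t) < r ->
      ex_derive (fun y' => f y' s) y /\
      ex_derive (fun y' => dx f y' s) y /\
      ex_derive (fun s' => f y s') s /\
      cont2 f y s /\ cont2 (dx f) y s /\ cont2 (dx (dx f)) y s /\ cont2 (dt f) y s.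

Definition smooth1_near (S : R -> Prop) (g : R -> R) : Prop :=
  forall x, S x -> exists r, 0 < r /\
    forall y, Rabs (y - x) < r -> forall n : nat, ex_derive_n g n y.

(* closed interval [a0,a1] = closure of Omega *)
Definition Icl (a0 a1 x : R) : Prop := a0 <= x <= a1.

Definition init_datum (a0 a1 : R) (f0 : R -> R) : Prop :=
  smooth1_near (Icl a0 a1) f0 /\
  exists c d, a0 < c /\ c <= d /\ d < a1 /\
    forall x, Icl a0 a1 x -> (x <= c \/ d <= x) -> Derive f0 x = 0.

Definition admissible_gamma (g : R -> R) : Prop :=
  smooth1_near (fun s => 0 <= s) g /\ forall s, 0 <= s -> 0 <= g s.

Definition L2sq (a0 a1 : R) (h : R -> R) : R := RInt (fun x => h x ^ 2) a0 a1.

Definition classical_solution (a0 a1 D tau alpha b eps : R) (g : R -> R)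
    (w0 v0 u0 Th0 : R -> R) (Tmax : Rbar) (w v u Th : R -> R -> R) : Prop :=
  Rbar_lt (Finite 0) Tmax /\
  (forall f, (f = w \/ f = v \/ f = u \/ f = Th) ->
     C21_near (fun x t => Icl a0 a1 x /\ 0 <= t /\ Rbar_lt (Finite t) Tmax) f /\
     smooth2_near (fun x t => Icl a0 a1 x /\ 0 < t /\ Rbar_lt (Finite t) Tmax) f) /\
  (forall x t, a0 < x < a1 -> 0 < t -> Rbar_lt (Finite t) Tmax ->
     tau * dt w x t = eps * dx (dx w) x t
                      + b * dx (fun y s => g (Th y s) * dx v y s) x t
                      + dx (fun y s => g (Th y s) * dx u y s) x t
                      - alpha * w x t /\
     dt v x t = eps * dx (dx v) x t + w x t /\
     dt u x t = eps * dx (dx u) x t + v x t /\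
     dt Th x t = D * dx (dx Th) x t + b * g (Th x t) * (dx v x t) ^ 2) /\
  (forall x t, (x = a0 \/ x = a1) -> 0 < t -> Rbar_lt (Finite t) Tmax ->
     dx w x t = 0 /\ dx v x t = 0 /\ dx u x t = 0 /\ dx Th x t = 0) /\
  (forall x, Icl a0 a1 x ->
     w x 0 = w0 x /\ v x 0 = v0 x /\ u x 0 = u0 x /\ Th x 0 = Th0 x) /\
  (forall x t, Icl a0 a1 x -> 0 <= t -> Rbar_lt (Finite t) Tmax -> 0 <= Th x t) /\
  (forall t, 0 <= t -> Rbar_lt (Finite t) Tmax ->
     RInt (fun x => w x t) a0 a1 = 0 /\ RInt (fun x => v x t) a0 a1 = 0 /\
     RInt (fun x => u x t) a0 a1 = 0) /\
  (* extensibility criterion: if Tmax < oo then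
     limsup_{t -> Tmax} (||w||_oo + ||v||_{W12} + ||u||_{W12} + ||Th||_oo) = oo *)
  (forall tm, Tmax = Finite tm ->
     forall M s, s < tm -> exists t x1 x2, s < t < tm /\ 0 <= t /\
       Icl a0 a1 x1 /\ Icl a0 a1 x2 /\
       Rabs (w x1 t)
       + sqrt (L2sq a0 a1 (fun x => v x t) + L2sq a0 a1 (fun x => dx v x t))
       + sqrt (L2sq a0 a1 (fun x => u x t) + L2sq a0 a1 (fun x => dx u x t))
       + Rabs (Th x2 t) > M).

Definition yfun (a0 a1 tau alpha b eps B delta : R) (g : R -> R)
    (w v u Th : R -> R -> R) (t : R) : R :=
  let G := fun x => g (Th x t) in
  let wx := fun x => dx w x t in
  let vx := fun x => dx v x t in
  let vxx := fun x => dx (dx v) x t in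
  let ux := fun x => dx u x t in
  let uxx := fun x => dx (dx u) x t in
  let uxxx := fun x => dx (dx (dx u)) x t in
  tau / 2 * RInt (fun x => wx x ^ 2) a0 a1
  + b / 2 * RInt (fun x => G x * vxx x ^ 2) a0 a1
  + (B + b * delta) / 2 * RInt (fun x => G x * uxx x ^ 2) a0 a1
  + (alpha * B - tau * delta) / 2 * RInt (fun x => vx x ^ 2) a0 a1
  + RInt (fun x => G x * uxx x * vxx x) a0 a1
  + eps * RInt (fun x => G x * uxxx x ^ 2) a0 a1
  + (1 + tau) * B * eps / 2 * RInt (fun x => vxx x ^ 2) a0 a1
  + tau * B * RInt (fun x => vx x * wx x) a0 a1
  + tau * delta * RInt (fun x => ux x * wx x) a0 a1
  + alpha * delta * RInt (fun x => ux x * vx x) a0 a1.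

Definition Efun (a0 a1 eps : R) (w v u : R -> R -> R) (t : R) : R :=
  RInt (fun x => dx w x t ^ 2) a0 a1
  + RInt (fun x => dx (dx v) x t ^ 2) a0 a1
  + RInt (fun x => dx (dx u) x t ^ 2) a0 a1
  + eps * RInt (fun x => dx (dx (dx u)) x t ^ 2) a0 a1.

(* With gs <= gamma <= gS, y is a quadratic form in the integrals of the derivatives
   at time t.  Young's inequality with a weight s1 in (1/b, B) splits the cross term
   int gamma u_xx v_xx between (b/2) int gamma v_xx^2 and (B/2) int gamma u_xx^2, and
   with a weight s2 in (B, alpha/tau) splits tau B int v_x w_x between (tau/2) int w_x^2
   and (alpha B/2) int v_x^2; what is left is coercive in w_x, v_x, v_xx, u_xx.  The
   delta-terms are at most delta (tau + alpha) (int w_x^2 + int v_x^2 + int u_x^2), and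
   since u_x and v_x vanish on the boundary, Poincare's inequality bounds int u_x^2 by
   int u_xx^2, so a small delta is absorbed.  The upper bound uses the same estimates
   in the other direction. *)

From Stdlib Require Import Reals Lra List.
From Coquelicot Require Import Coquelicot.
Open Scope R_scope.

Lemma young_weighted (G p q s : R) : 0 <= G -> 0 < s ->
  Rabs (G * p * q) <= s / 2 * (G * p ^ 2) + / (2 * s) * (G * q ^ 2).
Proof.
  intros G_ge0 s_gt0.
  assert (inv_gt0 : 0 < / (2 * s)) by (apply Rinv_0_lt_compat; lra).
  assert (sq_ge0 : forall r, 0 <= G * (/ (2 * s) * r ^ 2)).
  { intros r. apply Rmult_le_pos; [lra |].
    apply Rmult_le_pos; [lra | apply pow2_ge_0]. }
  assert (plus_sq := sq_ge0 (s * p + q)). assert (minus_sq := sq_ge0 (s * p - q)).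
  replace (G * (/ (2 * s) * (s * p + q) ^ 2))
    with (s / 2 * (G * p ^ 2) + / (2 * s) * (G * q ^ 2) + G * p * q)
    in plus_sq by (field; lra).
  replace (G * (/ (2 * s) * (s * p - q) ^ 2))
    with (s / 2 * (G * p ^ 2) + / (2 * s) * (G * q ^ 2) - G * p * q)
    in minus_sq by (field; lra).
  apply Rabs_le; lra.
Qed.

Lemma young (p q s : R) : 0 < s -> Rabs (p * q) <= s / 2 * p ^ 2 + / (2 * s) * q ^ 2.
Proof.
  intros s_gt0. assert (H := young_weighted 1 p q s Rle_0_1 s_gt0).
  rewrite !Rmult_1_l in H. exact H.
Qed.

Definition continuous_Icc (a b : R) (f : R -> R) : Prop :=
  forall x, a <= x <= b -> continuous f x.

Lemma continuous_Icc_mult (a b : R) (f g : R -> R) :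
  continuous_Icc a b f -> continuous_Icc a b g ->
  continuous_Icc a b (fun x => f x * g x).
Proof. intros f_cont g_cont x x_ab. apply (continuous_mult f g); auto. Qed.

Lemma continuous_Icc_sq (a b : R) (f : R -> R) :
  continuous_Icc a b f -> continuous_Icc a b (fun x => f x ^ 2).
Proof.
  intros f_cont x x_ab. apply continuous_ext with (fun y => f y * f y).
  - intros y. simpl. ring.
  - apply (continuous_mult f f); auto.
Qed.

Section IntegralsOnInterval.

Variables a b : R.
Hypothesis a_lt_b : a < b.

Lemma ex_RInt_continuous_Icc (f : R -> R) : continuous_Icc a b f -> ex_RInt f a b.
Proof.
  intros f_cont. apply (ex_RInt_continuous (V := R_CompleteNormedModule)).
  rewrite Rmin_left, Rmax_right by lra. exact f_cont.
Qed.

Lemma RInt_lin2 (f g : R -> R) (c d : R) :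
  ex_RInt f a b -> ex_RInt g a b ->
  ex_RInt (fun x => c * f x + d * g x) a b /\
  RInt (fun x => c * f x + d * g x) a b = c * RInt f a b + d * RInt g a b.
Proof.
  intros f_int g_int.
  assert (cf_int := ex_RInt_scal f a b c f_int).
  assert (dg_int := ex_RInt_scal g a b d g_int).
  split.
  - exact (ex_RInt_plus _ _ a b cf_int dg_int).
  - assert (sum_eq := RInt_plus _ _ a b cf_int dg_int).
    assert (cf_eq := RInt_scal f a b c f_int).
    assert (dg_eq := RInt_scal g a b d g_int).
    unfold plus, scal in *; simpl in *; unfold mult in *; simpl in *.
    rewrite sum_eq, cf_eq, dg_eq. reflexivity.
Qed.

Lemma RInt_sq_ge0 (f : R -> R) :
  ex_RInt (fun x => f x ^ 2) a b -> 0 <= RInt (fun x => f x ^ 2) a b.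
Proof. intros f_int. apply RInt_ge_0; [lra | exact f_int | intros; apply pow2_ge_0]. Qed.

Lemma RInt_abs_le_lin2 (r f g : R -> R) (c d : R) :
  ex_RInt r a b -> ex_RInt f a b -> ex_RInt g a b ->
  (forall x, a < x < b -> Rabs (r x) <= c * f x + d * g x) ->
  Rabs (RInt r a b) <= c * RInt f a b + d * RInt g a b.
Proof.
  intros r_int f_int g_int r_bound.
  destruct (RInt_lin2 f g c d f_int g_int) as [comb_int comb_eq].
  rewrite <- comb_eq.
  apply Rle_trans with (RInt (fun x => Rabs (r x)) a b).
  - apply abs_RInt_le; [lra | exact r_int].
  - apply RInt_le; [lra | | exact comb_int | exact r_bound].
    apply ex_RInt_norm. exact r_int.
Qed.

Lemma RInt_weighted_sq_bounds (G f : R -> R) (gs gS : R) :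
  ex_RInt (fun x => G x * f x ^ 2) a b -> ex_RInt (fun x => f x ^ 2) a b ->
  (forall x, a < x < b -> gs <= G x <= gS) ->
  gs * RInt (fun x => f x ^ 2) a b <= RInt (fun x => G x * f x ^ 2) a b
  <= gS * RInt (fun x => f x ^ 2) a b.
Proof.
  intros Gf_int f_int G_bounds.
  assert (scaled_int := fun k => ex_RInt_scal _ a b k f_int).
  assert (scaled_eq := fun k => RInt_scal _ a b k f_int).
  unfold scal in scaled_int, scaled_eq; simpl in scaled_int, scaled_eq.
  unfold mult in scaled_int, scaled_eq; simpl in scaled_int, scaled_eq.
  rewrite <- !scaled_eq.
  split; apply RInt_le; try lra; auto; intros x x_ab;
    destruct (G_bounds x x_ab); assert (0 <= f x ^ 2) by apply pow2_ge_0; nra.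
Qed.

Lemma RInt_young_weighted (G f h : R -> R) (s : R) :
  continuous_Icc a b G -> continuous_Icc a b f -> continuous_Icc a b h ->
  (forall x, a < x < b -> 0 <= G x) -> 0 < s ->
  Rabs (RInt (fun x => G x * f x * h x) a b)
  <= s / 2 * RInt (fun x => G x * f x ^ 2) a b
     + / (2 * s) * RInt (fun x => G x * h x ^ 2) a b.
Proof.
  intros G_cont f_cont h_cont G_ge0 s_gt0.
  apply RInt_abs_le_lin2; [apply ex_RInt_continuous_Icc .. |].
  - apply continuous_Icc_mult; [apply continuous_Icc_mult |]; assumption.
  - apply continuous_Icc_mult; [| apply continuous_Icc_sq]; assumption.
  - apply continuous_Icc_mult; [| apply continuous_Icc_sq]; assumption.
  - intros x x_ab. apply young_weighted; auto.
Qed.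

Lemma RInt_young (f h : R -> R) (s : R) :
  continuous_Icc a b f -> continuous_Icc a b h -> 0 < s ->
  Rabs (RInt (fun x => f x * h x) a b)
  <= s / 2 * RInt (fun x => f x ^ 2) a b + / (2 * s) * RInt (fun x => h x ^ 2) a b.
Proof.
  intros f_cont h_cont s_gt0.
  apply RInt_abs_le_lin2; [apply ex_RInt_continuous_Icc .. |].
  - apply continuous_Icc_mult; assumption.
  - apply continuous_Icc_sq; assumption.
  - apply continuous_Icc_sq; assumption.
  - intros x x_ab. apply young; auto.
Qed.

Section Poincare.

Variables f f' : R -> R.
Hypothesis f_derive : forall x, a <= x <= b -> is_derive f x (f' x).
Hypothesis f'_cont : continuous_Icc a b f'.
Hypothesis f_a : f a = 0.

Lemma continuous_Icc_of_derive : continuous_Icc a b f.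
Proof.
  intros x x_ab. apply (ex_derive_continuous (K := R_AbsRing) (V := R_NormedModule)).
  exists (f' x). exact (f_derive x x_ab).
Qed.

(* [f x ^ 2] is the integral of [2 f f'] over [a, x], and [2 f f' <= f^2 / c + c f'^2]. *)
Lemma sq_le_RInt_sq_of_derive (c : R) : 0 < c ->
  forall x, a <= x <= b ->
  f x ^ 2 <= / c * RInt (fun y => f y ^ 2) a b + c * RInt (fun y => f' y ^ 2) a b.
Proof.
  intros c_gt0 x x_ab.
  assert (f_cont := continuous_Icc_of_derive).
  set (h := fun y => / c * f y ^ 2 + c * f' y ^ 2).
  assert (inv_c_gt0 : 0 < / c) by (apply Rinv_0_lt_compat; lra).
  destruct (RInt_lin2 (fun y => f y ^ 2) (fun y => f' y ^ 2) (/ c) c) as [h_int h_eq];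
    try (apply ex_RInt_continuous_Icc, continuous_Icc_sq; assumption).
  fold h in h_int, h_eq. rewrite <- h_eq.
  assert (h_ge0 : forall y, 0 <= h y).
  { intros y. unfold h.
    assert (0 <= / c * f y ^ 2) by (apply Rmult_le_pos; [lra | apply pow2_ge_0]).
    assert (0 <= c * f' y ^ 2) by (apply Rmult_le_pos; [lra | apply pow2_ge_0]).
    lra. }
  assert (sq_derive : forall y, a <= y <= x -> is_derive (fun z => f z ^ 2) y (2 * f y * f' y)).
  { intros y y_ax.
    assert (D := is_derive_pow f 2 y (f' y) (f_derive y ltac:(lra))).
    simpl in D. replace (2 * f y * f' y) with (INR 2 * f' y * (f y * 1)) by (simpl; ring).
    exact D. }
  assert (sq_RInt := is_RInt_derive (V := R_CompleteNormedModule)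
                       (fun z => f z ^ 2) (fun y => 2 * f y * f' y) a x).
  rewrite Rmin_left, Rmax_right in sq_RInt by lra.
  assert (prod_RInt : is_RInt (fun y => 2 * f y * f' y) a x (f x ^ 2)).
  { replace (f x ^ 2) with (minus (f x ^ 2) (f a ^ 2))
      by (rewrite f_a; unfold minus, plus, opp; simpl; ring).
    assert (prod_cont : continuous_Icc a b (fun y => 2 * f y * f' y)).
    { apply continuous_Icc_mult; [apply continuous_Icc_mult |]; try assumption.
      intros z _. apply continuous_const. }
    apply sq_RInt; [exact sq_derive | intros y y_ax; apply prod_cont; lra]. }
  rewrite <- (is_RInt_unique _ _ _ _ prod_RInt).
  assert (head_int : ex_RInt h a x)
    by (apply (ex_RInt_Chasles_1 (V := R_CompleteNormedModule)) with b; auto).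
  assert (tail_int : ex_RInt h x b)
    by (apply (ex_RInt_Chasles_2 (V := R_CompleteNormedModule)) with a; auto).
  rewrite <- (RInt_Chasles h a x b head_int tail_int).
  assert (tail_ge0 : 0 <= RInt h x b) by (apply RInt_ge_0; [lra | | auto]; auto).
  assert (head_le : RInt (fun y => 2 * f y * f' y) a x <= RInt h a x).
  { apply RInt_le; [lra | eexists; exact prod_RInt | exact head_int |].
    intros y y_ax. unfold h.
    assert (0 <= / c * (f y - c * f' y) ^ 2) by (apply Rmult_le_pos; [lra | apply pow2_ge_0]).
    replace (/ c * (f y - c * f' y) ^ 2)
      with (/ c * f y ^ 2 + c * f' y ^ 2 - 2 * f y * f' y) in * by (field; lra).
    lra. }
  unfold plus; simpl. lra.
Qed.

Lemma RInt_sq_le_poincare :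
  RInt (fun x => f x ^ 2) a b <= 4 * (b - a) ^ 2 * RInt (fun x => f' x ^ 2) a b.
Proof.
  set (I := RInt (fun x => f x ^ 2) a b). set (I' := RInt (fun x => f' x ^ 2) a b).
  assert (pointwise := sq_le_RInt_sq_of_derive (2 * (b - a)) ltac:(lra)).
  fold I I' in pointwise.
  assert (integrated : I <= (b - a) * (/ (2 * (b - a)) * I + 2 * (b - a) * I')).
  { unfold I at 1.
    replace ((b - a) * (/ (2 * (b - a)) * I + 2 * (b - a) * I'))
      with (RInt (fun _ => / (2 * (b - a)) * I + 2 * (b - a) * I') a b)
      by (rewrite RInt_const; reflexivity).
    apply RInt_le; [lra | | apply ex_RInt_const |].
    - apply ex_RInt_continuous_Icc, continuous_Icc_sq, continuous_Icc_of_derive.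
    - intros x x_ab. apply pointwise. lra. }
  replace ((b - a) * (/ (2 * (b - a)) * I + 2 * (b - a) * I'))
    with (I / 2 + 2 * (b - a) ^ 2 * I') in integrated by (field; lra).
  lra.
Qed.

End Poincare.

End IntegralsOnInterval.

(* [wx2] stands for int w_x^2, [g_uxx_vxx] for int gamma u_xx v_xx, and so on. *)
Record slice_energies := {
  wx2 : R; vx2 : R; vxx2 : R; ux2 : R; uxx2 : R; uxxx2 : R;
  g_vxx2 : R; g_uxx2 : R; g_uxxx2 : R; g_uxx_vxx : R;
  vx_wx : R; ux_wx : R; ux_vx : R }.

Definition yform (tau alpha b B delta eps : R) (I : slice_energies) : R :=
  tau / 2 * wx2 I + b / 2 * g_vxx2 I + (B + b * delta) / 2 * g_uxx2 I
  + (alpha * B - tau * delta) / 2 * vx2 I + g_uxx_vxx I + eps * g_uxxx2 I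
  + (1 + tau) * B * eps / 2 * vxx2 I + tau * B * vx_wx I
  + tau * delta * ux_wx I + alpha * delta * ux_vx I.

Definition eform (eps : R) (I : slice_energies) : R :=
  wx2 I + vxx2 I + uxx2 I + eps * uxxx2 I.

Definition young_bound (X A C : R) : Prop :=
  forall s, 0 < s -> Rabs X <= s / 2 * A + / (2 * s) * C.

Set Implicit Arguments.

Record energy_relations (gs gS P : R) (I : slice_energies) : Prop := {
  wx2_ge0 : 0 <= wx2 I; vx2_ge0 : 0 <= vx2 I; vxx2_ge0 : 0 <= vxx2 I;
  ux2_ge0 : 0 <= ux2 I; uxx2_ge0 : 0 <= uxx2 I; uxxx2_ge0 : 0 <= uxxx2 I;
  g_vxx2_bounds : gs * vxx2 I <= g_vxx2 I <= gS * vxx2 I;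
  g_uxx2_bounds : gs * uxx2 I <= g_uxx2 I <= gS * uxx2 I;
  g_uxxx2_bounds : gs * uxxx2 I <= g_uxxx2 I <= gS * uxxx2 I;
  young_uxx_vxx : young_bound (g_uxx_vxx I) (g_uxx2 I) (g_vxx2 I);
  young_vx_wx : young_bound (vx_wx I) (vx2 I) (wx2 I);
  young_ux_wx : young_bound (ux_wx I) (ux2 I) (wx2 I);
  young_ux_vx : young_bound (ux_vx I) (ux2 I) (vx2 I);
  poincare_vx : vx2 I <= P * vxx2 I;
  poincare_ux : ux2 I <= P * uxx2 I }.

Unset Implicit Arguments.

Lemma young_bound_lower (X A C : R) : young_bound X A C ->
  forall s, 0 < s -> - (s / 2 * A + / (2 * s) * C) <= X.
Proof. intros young s s_gt0. assert (H := young s s_gt0). apply Rabs_le_between in H. lra. Qed.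

Lemma young_bound_upper (X A C : R) : young_bound X A C -> X <= (A + C) / 2.
Proof.
  intros young. assert (H := young 1 Rlt_0_1). apply Rabs_le_between in H.
  replace (/ (2 * 1)) with (/ 2) in H by field. lra.
Qed.

Lemma Rmult_le_compat_coef (c c' x y : R) :
  0 <= c <= c' -> x <= y -> 0 <= y -> c * x <= c' * y.
Proof.
  intros c_bounds x_y y_ge0.
  apply Rle_trans with (c * y); [apply Rmult_le_compat_l | apply Rmult_le_compat_r]; lra.
Qed.

Section Coercivity.

Variables tau alpha b B gs gS P : R.
Hypotheses (tau_gt0 : 0 < tau) (alpha_gt0 : 0 < alpha) (b_gt0 : 0 < b) (B_gt0 : 0 < B)
  (B_gt : 1 / b < B) (B_lt : B < alpha / tau) (gs_gt0 : 0 < gs) (gs_lt_gS : gs < gS)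
  (P_ge0 : 0 <= P).

Definition s1 : R := (1 / b + B) / 2.
Definition s2 : R := (B + alpha / tau) / 2.

Definition coef_wx : R := tau / 2 * (1 - B / s2).
Definition coef_vx : R := B / 2 * (alpha - tau * s2).
Definition coef_vxx : R := (b - / s1) / 2 * gs.
Definition coef_uxx : R := (B - s1) / 2 * gs.

Definition delta1 : R :=
  Rmin (coef_wx / 2) (Rmin coef_vx (coef_uxx / (2 * (P + 1)))) / (tau + alpha).
Definition k1 : R := Rmin (Rmin (coef_wx / 2) coef_vxx) (Rmin (coef_uxx / 2) gs).
Definition k2 : R :=
  tau / 2 + b / 2 * gS + (B + b * delta1) / 2 * gS + alpha * B / 2 * P + gS + gS
  + (1 + tau) * B / 2 + tau * B * (P + 1) / 2 + tau * delta1 * (P + 1) / 2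
  + alpha * delta1 * P.

Lemma s1_bounds : 0 < s1 /\ / s1 < b /\ s1 < B.
Proof.
  assert (inv_b_gt0 : 0 < 1 / b) by (apply Rdiv_lt_0_compat; lra).
  unfold s1. split; [lra | split; [| lra]].
  replace b with (/ (1 / b)) at 2 by (field; lra).
  apply Rinv_lt_contravar; nra.
Qed.

Lemma s2_bounds : 0 < s2 /\ B / s2 < 1 /\ tau * s2 < alpha.
Proof.
  assert (tau_B : tau * B < alpha).
  { apply (Rmult_lt_compat_l tau) in B_lt; [| lra].
    replace (tau * (alpha / tau)) with alpha in B_lt by (field; lra). exact B_lt. }
  assert (s2_gt_B : B < s2) by (unfold s2; lra).
  split; [lra | split].
  - apply (Rmult_lt_reg_r s2); [lra |]. unfold Rdiv. rewrite Rmult_assoc, Rinv_l; lra.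
  - unfold s2. replace (tau * ((B + alpha / tau) / 2)) with ((tau * B + alpha) / 2)
      by (field; lra). lra.
Qed.

Lemma coefs_pos : 0 < coef_wx /\ 0 < coef_vx /\ 0 < coef_vxx /\ 0 < coef_uxx.
Proof.
  destruct s1_bounds as [? [? ?]]. destruct s2_bounds as [? [? ?]].
  unfold coef_wx, coef_vx, coef_vxx, coef_uxx.
  repeat split; apply Rmult_lt_0_compat; lra.
Qed.

Lemma delta1_pos : 0 < delta1.
Proof.
  destruct coefs_pos as [? [? [? ?]]].
  unfold delta1. apply Rdiv_lt_0_compat; [| lra].
  repeat apply Rmin_pos; try apply Rdiv_lt_0_compat; lra.
Qed.

Lemma k1_pos : 0 < k1.
Proof. destruct coefs_pos as [? [? [? ?]]]. unfold k1. repeat apply Rmin_pos; lra. Qed.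

Lemma k2_pos : 0 < k2.
Proof.
  assert (d1 := delta1_pos). unfold k2.
  assert (0 <= alpha * B / 2 * P) by (apply Rmult_le_pos; nra).
  assert (0 <= tau * B * (P + 1) / 2)
    by (apply Rmult_le_pos; [| lra]; apply Rmult_le_pos; nra).
  assert (0 <= tau * delta1 * (P + 1) / 2)
    by (apply Rmult_le_pos; [| lra]; apply Rmult_le_pos; nra).
  assert (0 <= alpha * delta1 * P) by (apply Rmult_le_pos; nra).
  assert (0 <= (B + b * delta1) / 2 * gS) by (apply Rmult_le_pos; nra).
  assert (0 <= b / 2 * gS) by (apply Rmult_le_pos; nra).
  assert (0 <= (1 + tau) * B / 2) by (apply Rmult_le_pos; nra).
  lra.
Qed.

Lemma delta_small (delta : R) : 0 < delta <= delta1 ->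
  delta * (tau + alpha) <= coef_wx / 2 /\ delta * (tau + alpha) <= coef_vx /\
  delta * (tau + alpha) * P <= coef_uxx / 2.
Proof.
  intros delta_bounds. destruct coefs_pos as [? [? [? ?]]].
  set (m := Rmin (coef_wx / 2) (Rmin coef_vx (coef_uxx / (2 * (P + 1))))).
  assert (delta_m : delta * (tau + alpha) <= m).
  { apply Rle_trans with (delta1 * (tau + alpha)); [apply Rmult_le_compat_r; lra |].
    unfold delta1. fold m. right. field. lra. }
  assert (m_wx : m <= coef_wx / 2) by apply Rmin_l.
  assert (m_vx : m <= coef_vx) by (eapply Rle_trans; [apply Rmin_r | apply Rmin_l]).
  assert (m_uxx : m <= coef_uxx / (2 * (P + 1)))
    by (eapply Rle_trans; [apply Rmin_r | apply Rmin_r]).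
  split; [lra | split; [lra |]].
  apply Rle_trans with (coef_uxx / (2 * (P + 1)) * P); [apply Rmult_le_compat_r; lra |].
  apply (Rmult_le_reg_r (P + 1)); [lra |].
  replace (coef_uxx / (2 * (P + 1)) * P * (P + 1)) with (coef_uxx / 2 * P) by (field; lra).
  nra.
Qed.

Section Bounds.

Variables (delta eps : R) (I : slice_energies).
Hypotheses (delta_bounds : 0 < delta <= delta1) (eps_bounds : 0 < eps < 1)
  (rel : energy_relations gs gS P I).

Lemma principal_part_lower :
  coef_wx * wx2 I + coef_vx * vx2 I + coef_vxx * vxx2 I + coef_uxx * uxx2 I
  <= tau / 2 * wx2 I + b / 2 * g_vxx2 I + B / 2 * g_uxx2 I + alpha * B / 2 * vx2 I
     + g_uxx_vxx I + tau * B * vx_wx I.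
Proof.
  destruct s1_bounds as [s1_gt0 [s1_inv s1_B]].
  destruct s2_bounds as [s2_gt0 [s2_B s2_alpha]].
  assert (uv := young_bound_lower _ _ _ (young_uxx_vxx rel) s1 s1_gt0).
  assert (vw := young_bound_lower _ _ _ (young_vx_wx rel) s2 s2_gt0).
  pose proof (g_vxx2_bounds rel). pose proof (g_uxx2_bounds rel).
  apply (Rmult_le_compat_l (tau * B)) in vw; [| nra].
  assert (vxx_part : coef_vxx * vxx2 I <= (b - / s1) / 2 * g_vxx2 I).
  { unfold coef_vxx. rewrite Rmult_assoc. apply Rmult_le_compat_l; lra. }
  assert (uxx_part : coef_uxx * uxx2 I <= (B - s1) / 2 * g_uxx2 I).
  { unfold coef_uxx. rewrite Rmult_assoc. apply Rmult_le_compat_l; lra. }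
  unfold coef_wx, coef_vx.
  replace (/ (2 * s1)) with (/ s1 / 2) in uv by (field; lra).
  replace (tau * B * - (s2 / 2 * vx2 I + / (2 * s2) * wx2 I))
    with (- (tau * B * s2 / 2 * vx2 I + tau / 2 * (B / s2) * wx2 I)) in vw by (field; lra).
  lra.
Qed.

Lemma perturbation_lower :
  - (delta * (tau + alpha) * (wx2 I + vx2 I + ux2 I))
  <= b * delta / 2 * g_uxx2 I - tau * delta / 2 * vx2 I
     + tau * delta * ux_wx I + alpha * delta * ux_vx I.
Proof.
  assert (uw := young_bound_lower _ _ _ (young_ux_wx rel) 1 Rlt_0_1).
  assert (uv := young_bound_lower _ _ _ (young_ux_vx rel) 1 Rlt_0_1).
  replace (/ (2 * 1)) with (1 / 2) in uw, uv by field.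
  pose proof (g_uxx2_bounds rel). pose proof (uxx2_ge0 rel).
  pose proof (wx2_ge0 rel). pose proof (vx2_ge0 rel). pose proof (ux2_ge0 rel).
  assert (0 <= g_uxx2 I) by nra.
  apply (Rmult_le_compat_l (tau * delta)) in uw; [| nra].
  apply (Rmult_le_compat_l (alpha * delta)) in uv; [| nra].
  assert (0 <= b * delta / 2 * g_uxx2 I) by (apply Rmult_le_pos; nra).
  assert (0 <= delta * tau * wx2 I) by (apply Rmult_le_pos; nra).
  assert (0 <= delta * tau * vx2 I) by (apply Rmult_le_pos; nra).
  assert (0 <= delta * tau * ux2 I) by (apply Rmult_le_pos; nra).
  assert (0 <= delta * alpha * wx2 I) by (apply Rmult_le_pos; nra).
  assert (0 <= delta * alpha * vx2 I) by (apply Rmult_le_pos; nra).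
  assert (0 <= delta * alpha * ux2 I) by (apply Rmult_le_pos; nra).
  lra.
Qed.

Lemma yform_lower_bound : k1 * eform eps I <= yform tau alpha b B delta eps I.
Proof.
  destruct coefs_pos as [? [? [? ?]]].
  destruct (delta_small delta delta_bounds) as [small_wx [small_vx small_ux]].
  pose proof principal_part_lower. pose proof perturbation_lower.
  pose proof (wx2_ge0 rel). pose proof (vx2_ge0 rel). pose proof (vxx2_ge0 rel).
  pose proof (ux2_ge0 rel). pose proof (uxx2_ge0 rel). pose proof (uxxx2_ge0 rel).
  pose proof (g_uxxx2_bounds rel). pose proof (poincare_ux rel).
  assert (absorb_wx : delta * (tau + alpha) * wx2 I <= coef_wx / 2 * wx2 I)
    by (apply Rmult_le_compat_r; lra).
  assert (absorb_vx : delta * (tau + alpha) * vx2 I <= coef_vx * vx2 I)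
    by (apply Rmult_le_compat_r; lra).
  assert (absorb_ux : delta * (tau + alpha) * ux2 I <= coef_uxx / 2 * uxx2 I).
  { apply Rle_trans with (delta * (tau + alpha) * (P * uxx2 I)).
    - apply Rmult_le_compat_l; nra.
    - rewrite <- Rmult_assoc. apply Rmult_le_compat_r; lra. }
  assert (eps_uxxx : gs * (eps * uxxx2 I) <= eps * g_uxxx2 I) by nra.
  assert (0 <= (1 + tau) * B * eps / 2 * vxx2 I)
    by (apply Rmult_le_pos; [| lra]; unfold Rdiv; repeat apply Rmult_le_pos; lra).
  assert (coercive : coef_wx / 2 * wx2 I + coef_vxx * vxx2 I + coef_uxx / 2 * uxx2 I
                     + gs * (eps * uxxx2 I) <= yform tau alpha b B delta eps I)
    by (unfold yform; lra).
  assert (k1_wx : k1 <= coef_wx / 2) by (eapply Rle_trans; [apply Rmin_l | apply Rmin_l]).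
  assert (k1_vxx : k1 <= coef_vxx) by (eapply Rle_trans; [apply Rmin_l | apply Rmin_r]).
  assert (k1_uxx : k1 <= coef_uxx / 2) by (eapply Rle_trans; [apply Rmin_r | apply Rmin_l]).
  assert (k1_uxxx : k1 <= gs) by (eapply Rle_trans; [apply Rmin_r | apply Rmin_r]).
  assert (0 <= eps * uxxx2 I) by nra.
  unfold eform. nra.
Qed.

Lemma yform_upper_bound : yform tau alpha b B delta eps I <= k2 * eform eps I.
Proof.
  set (E := eform eps I).
  pose proof (wx2_ge0 rel). pose proof (vx2_ge0 rel). pose proof (vxx2_ge0 rel).
  pose proof (ux2_ge0 rel). pose proof (uxx2_ge0 rel). pose proof (uxxx2_ge0 rel).
  pose proof (g_vxx2_bounds rel). pose proof (g_uxx2_bounds rel).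
  pose proof (g_uxxx2_bounds rel).
  assert (0 <= eps * uxxx2 I) by nra.
  assert (wx_E : wx2 I <= E) by (unfold E, eform; lra).
  assert (vxx_E : vxx2 I <= E) by (unfold E, eform; lra).
  assert (uxx_E : uxx2 I <= E) by (unfold E, eform; lra).
  assert (uxxx_E : eps * uxxx2 I <= E) by (unfold E, eform; lra).
  assert (E_ge0 : 0 <= E) by lra.
  assert (g_vxx_E : g_vxx2 I <= gS * E) by nra.
  assert (g_uxx_E : g_uxx2 I <= gS * E) by nra.
  assert (g_uxxx_E : eps * g_uxxx2 I <= gS * E) by nra.
  assert (vx_E : vx2 I <= P * E) by (pose proof (poincare_vx rel); nra).
  assert (ux_E : ux2 I <= P * E) by (pose proof (poincare_ux rel); nra).
  assert (uxx_vxx_E := young_bound_upper _ _ _ (young_uxx_vxx rel)).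
  assert (vx_wx_E := young_bound_upper _ _ _ (young_vx_wx rel)).
  assert (ux_wx_E := young_bound_upper _ _ _ (young_ux_wx rel)).
  assert (ux_vx_E := young_bound_upper _ _ _ (young_ux_vx rel)).
  assert (d1 := delta1_pos).
  assert (wx_term : tau / 2 * wx2 I <= tau / 2 * E) by (apply Rmult_le_compat_coef; lra).
  assert (g_vxx_term : b / 2 * g_vxx2 I <= b / 2 * (gS * E)) by (apply Rmult_le_compat_coef; nra).
  assert (g_uxx_term : (B + b * delta) / 2 * g_uxx2 I <= (B + b * delta1) / 2 * (gS * E))
    by (apply Rmult_le_compat_coef; nra).
  assert (vx_term : (alpha * B - tau * delta) / 2 * vx2 I <= alpha * B / 2 * (P * E)).
  { assert (0 <= tau * delta * vx2 I) by (apply Rmult_le_pos; nra).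
    apply Rle_trans with (alpha * B / 2 * vx2 I); [lra |].
    apply Rmult_le_compat_coef; nra. }
  assert (vxx_term : (1 + tau) * B * eps / 2 * vxx2 I <= (1 + tau) * B / 2 * E)
    by (assert (0 < (1 + tau) * B) by nra; apply Rmult_le_compat_coef; try split; nra).
  assert (vx_wx_term : tau * B * vx_wx I <= tau * B * ((P + 1) / 2 * E))
    by (apply Rmult_le_compat_coef; nra).
  assert (ux_wx_term : tau * delta * ux_wx I <= tau * delta1 * ((P + 1) / 2 * E))
    by (apply Rmult_le_compat_coef; try split; nra).
  assert (ux_vx_term : alpha * delta * ux_vx I <= alpha * delta1 * (P * E))
    by (apply Rmult_le_compat_coef; try split; nra).
  unfold yform, k2. fold E. lra.
Qed.

End Bounds.

End Coercivity.

Lemma smooth2_near_continuous_slice (S : R -> R -> Prop) (f : R -> R -> R) (l : list bool)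
  (x t : R) : smooth2_near S f -> S x t -> continuous (fun y => pd l f y t) x.
Proof.
  intros f_smooth Sxt. destruct (f_smooth x t Sxt) as [r [r_gt0 near]].
  assert (at_center : Rabs (x - x) < r /\ Rabs (t - t) < r)
    by (rewrite !Rminus_diag, Rabs_R0; lra).
  destruct (near x t (proj1 at_center) (proj2 at_center) l) as [_ [_ f_cont]].
  apply (continuous_comp_2 (fun y => y) (fun _ => t) (pd l f) x);
    [apply continuous_id | apply continuous_const | exact f_cont].
Qed.

Lemma smooth2_near_is_derive_slice (S : R -> R -> Prop) (f : R -> R -> R) (l : list bool)
  (x t : R) : smooth2_near S f -> S x t ->
  is_derive (fun y => pd l f y t) x (pd (true :: l) f x t).
Proof.
  intros f_smooth Sxt. destruct (f_smooth x t Sxt) as [r [r_gt0 near]].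
  assert (at_center : Rabs (x - x) < r /\ Rabs (t - t) < r)
    by (rewrite !Rminus_diag, Rabs_R0; lra).
  destruct (near x t (proj1 at_center) (proj2 at_center) l) as [f_der _].
  exact (Derive_correct _ _ f_der).
Qed.

Lemma admissible_gamma_continuous (g : R -> R) (s : R) :
  admissible_gamma g -> 0 <= s -> continuous g s.
Proof.
  intros [g_smooth _] s_ge0. destruct (g_smooth s s_ge0) as [r [r_gt0 near]].
  apply (ex_derive_continuous (K := R_AbsRing) (V := R_NormedModule)).
  apply (near s ltac:(rewrite Rminus_diag, Rabs_R0; lra) 1%nat).
Qed.

Definition slice_energies_at (a0 a1 : R) (g : R -> R) (w v u Th : R -> R -> R) (t : R)
  : slice_energies :=
  let G x := g (Th x t) in
  {| wx2 := RInt (fun x => dx w x t ^ 2) a0 a1;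
     vx2 := RInt (fun x => dx v x t ^ 2) a0 a1;
     vxx2 := RInt (fun x => dx (dx v) x t ^ 2) a0 a1;
     ux2 := RInt (fun x => dx u x t ^ 2) a0 a1;
     uxx2 := RInt (fun x => dx (dx u) x t ^ 2) a0 a1;
     uxxx2 := RInt (fun x => dx (dx (dx u)) x t ^ 2) a0 a1;
     g_vxx2 := RInt (fun x => G x * dx (dx v) x t ^ 2) a0 a1;
     g_uxx2 := RInt (fun x => G x * dx (dx u) x t ^ 2) a0 a1;
     g_uxxx2 := RInt (fun x => G x * dx (dx (dx u)) x t ^ 2) a0 a1;
     g_uxx_vxx := RInt (fun x => G x * dx (dx u) x t * dx (dx v) x t) a0 a1;
     vx_wx := RInt (fun x => dx v x t * dx w x t) a0 a1;
     ux_wx := RInt (fun x => dx u x t * dx w x t) a0 a1;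
     ux_vx := RInt (fun x => dx u x t * dx v x t) a0 a1 |}.

Lemma yfun_eq_yform (a0 a1 tau alpha b eps B delta : R) (g : R -> R) (w v u Th : R -> R -> R)
  (t : R) : yfun a0 a1 tau alpha b eps B delta g w v u Th t
            = yform tau alpha b B delta eps (slice_energies_at a0 a1 g w v u Th t).
Proof. reflexivity. Qed.

Lemma Efun_eq_eform (a0 a1 eps : R) (g : R -> R) (w v u Th : R -> R -> R) (t : R) :
  Efun a0 a1 eps w v u t = eform eps (slice_energies_at a0 a1 g w v u Th t).
Proof. reflexivity. Qed.

Lemma slice_energy_relations (S : R -> R -> Prop) (a0 a1 gs gS : R) (g : R -> R)
  (w v u Th : R -> R -> R) (t : R) :
  a0 < a1 -> (forall x, a0 <= x <= a1 -> S x t) ->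
  smooth2_near S w -> smooth2_near S v -> smooth2_near S u -> smooth2_near S Th ->
  admissible_gamma g -> (forall x, a0 <= x <= a1 -> 0 <= Th x t) ->
  (forall x, a0 < x < a1 -> gs <= g (Th x t) <= gS) ->
  dx v a0 t = 0 -> dx u a0 t = 0 ->
  energy_relations gs gS (4 * (a1 - a0) ^ 2) (slice_energies_at a0 a1 g w v u Th t).
Proof.
  intros a01 S_slice w_smooth v_smooth u_smooth Th_smooth g_adm Th_ge0 G_bounds vx_a0 ux_a0.
  assert (slice : forall f l, smooth2_near S f -> continuous_Icc a0 a1 (fun y => pd l f y t))
    by (intros f l f_smooth x x_a01; apply (smooth2_near_continuous_slice S); auto).
  assert (W := slice w (true :: nil) w_smooth).
  assert (V1 := slice v (true :: nil) v_smooth).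
  assert (V2 := slice v (true :: true :: nil) v_smooth).
  assert (U1 := slice u (true :: nil) u_smooth).
  assert (U2 := slice u (true :: true :: nil) u_smooth).
  assert (U3 := slice u (true :: true :: true :: nil) u_smooth).
  simpl in W, V1, V2, U1, U2, U3.
  assert (G : continuous_Icc a0 a1 (fun x => g (Th x t))).
  { intros x x_a01. apply (continuous_comp (fun y => Th y t) g).
    - exact (slice Th nil Th_smooth x x_a01).
    - apply admissible_gamma_continuous; auto. }
  assert (G_ge0 : forall x, a0 < x < a1 -> 0 <= g (Th x t))
    by (intros x x_a01; apply (proj2 g_adm), Th_ge0; lra).
  assert (sq : forall f, continuous_Icc a0 a1 f -> ex_RInt (fun x => f x ^ 2) a0 a1)
    by (intros; apply ex_RInt_continuous_Icc, continuous_Icc_sq; auto).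
  assert (weighted_sq : forall f, continuous_Icc a0 a1 f ->
            ex_RInt (fun x => g (Th x t) * f x ^ 2) a0 a1)
    by (intros; apply ex_RInt_continuous_Icc, continuous_Icc_mult, continuous_Icc_sq; auto).
  assert (poincare : forall f, smooth2_near S f -> dx f a0 t = 0 ->
            RInt (fun x => dx f x t ^ 2) a0 a1
            <= 4 * (a1 - a0) ^ 2 * RInt (fun x => dx (dx f) x t ^ 2) a0 a1).
  { intros f f_smooth f_a0. apply RInt_sq_le_poincare; auto.
    - intros x x_a01. exact (smooth2_near_is_derive_slice S f (true :: nil) x t f_smooth
                               (S_slice x x_a01)).
    - exact (slice f (true :: true :: nil) f_smooth). }
  split; simpl.
  1-6: apply RInt_sq_ge0, sq; assumption.
  1-3: apply RInt_weighted_sq_bounds;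
    [assumption | apply weighted_sq; assumption | apply sq; assumption | exact G_bounds].
  - intros s s_gt0. apply RInt_young_weighted; assumption.
  1-3: intros s s_gt0; apply RInt_young; assumption.
  1-2: apply poincare; assumption.
Qed.

Theorem lemma4p2 :
  forall (a0 a1 tau alpha b B gs gS : R),
    a0 < a1 -> 0 < tau -> 0 < alpha -> 0 < b -> alpha * b > tau ->
    0 < B -> 1 / b < B -> B < alpha / tau ->
    0 < gs -> gs < gS ->
    exists delta1 k1 k2 : R, 0 < delta1 /\ 0 < k1 /\ 0 < k2 /\
      forall (delta D eps : R) (g : R -> R) (w0 v0 u0 Th0 : R -> R)
             (Tmax : Rbar) (w v u Th : R -> R -> R) (T : R),
        0 < delta -> delta <= delta1 -> 0 < D ->
        admissible_gamma g ->
        init_datum a0 a1 w0 -> init_datum a0 a1 v0 ->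
        init_datum a0 a1 u0 -> init_datum a0 a1 Th0 ->
        RInt u0 a0 a1 = 0 -> RInt v0 a0 a1 = 0 -> RInt w0 a0 a1 = 0 ->
        (forall x, Icl a0 a1 x -> 0 <= Th0 x) ->
        0 < eps -> eps < 1 ->
        classical_solution a0 a1 D tau alpha b eps g w0 v0 u0 Th0 Tmax w v u Th ->
        0 < T -> Rbar_lt (Finite T) Tmax ->
        (forall x t, a0 < x < a1 -> 0 < t < T -> gs <= g (Th x t) <= gS) ->
        forall t, 0 < t < T ->
          k1 * Efun a0 a1 eps w v u t <= yfun a0 a1 tau alpha b eps B delta g w v u Th t /\
          yfun a0 a1 tau alpha b eps B delta g w v u Th t <= k2 * Efun a0 a1 eps w v u t.
Proof.
  (* [alpha * b > tau] is implied by [1 / b < B < alpha / tau]. *)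
  intros a0 a1 tau alpha b B gs gS a01 tau_gt0 alpha_gt0 b_gt0 _ B_gt0 B_gt B_lt gs_gt0 gs_gS.
  assert (P_ge0 : 0 <= 4 * (a1 - a0) ^ 2) by (apply Rmult_le_pos; [lra | apply pow2_ge_0]).
  set (P := 4 * (a1 - a0) ^ 2) in *.
  exists (delta1 tau alpha b B gs P), (k1 tau alpha b B gs), (k2 tau alpha b B gs gS P).
  split; [apply delta1_pos | split; [apply k1_pos | split; [apply k2_pos |]]]; auto.
  intros delta D eps g w0 v0 u0 Th0 Tmax w v u Th T delta_gt0 delta_le _ g_adm _ _ _ _ _ _ _ _
    eps_gt0 eps_lt1 sol T_gt0 T_lt G_bounds t t_T.
  destruct sol as [_ [regularity [_ [neumann [_ [Th_ge0 _]]]]]].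
  assert (t_lt : Rbar_lt (Finite t) Tmax)
    by (apply Rbar_lt_trans with (Finite T); [simpl; lra | exact T_lt]).
  set (S := fun x s => Icl a0 a1 x /\ 0 < s /\ Rbar_lt (Finite s) Tmax).
  assert (smooth : forall f, f = w \/ f = v \/ f = u \/ f = Th -> smooth2_near S f)
    by (intros f f_sol; apply (regularity f f_sol)).
  destruct (neumann a0 t (or_introl eq_refl) (proj1 t_T) t_lt) as [_ [vx_a0 [ux_a0 _]]].
  assert (rel : energy_relations gs gS P (slice_energies_at a0 a1 g w v u Th t)).
  { apply (slice_energy_relations S); try (apply smooth; tauto); try assumption.
    - intros x x_a01. unfold S, Icl. repeat split; lra || auto.
    - intros x x_a01. apply Th_ge0; unfold Icl; auto; lra.
    - intros x x_a01. apply G_bounds; lra. }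
  rewrite yfun_eq_yform, (Efun_eq_eform a0 a1 eps g w v u Th).
  split; [apply (yform_lower_bound _ _ _ _ _ gS P) | apply (yform_upper_bound _ _ _ _ _ gS P)];
    auto; lra.
Qed.
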